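(* Let $\omega:\Gamma^2\to\Gamma$ be a group morphism and define $\widetilde\omega:\Gamma^2\to\Gamma$ by $\widetilde\omega(g,h):=\omega(h,g)$. Then $G(\widetilde\omega)\cong G(\omega)$.
   Context: $\{0,1\}^*$ denotes the finite words over $\{0,1\}$; $\mathfrak C=\{0,1\}^{\mathbb N}$. A finite complete prefix code is a finite set $\{t_1,\dots,t_n\}\subset\{0,1\}^*$ such that every $x\in\mathfrak C$ has exactly one $t_i$ as prefix. Thompson's group $V$ is the group of homeomorphisms $v$ of $\mathfrak C$ for which there exist finite complete prefix codes $\{t_i\},\{s_i\}$ and a permutation $\sigma$ with $v(t_iw)=s_{\sigma(i)}w$. For a group morphism $\omega:\Gamma^2\to\Gamma$, $K(\omega)$ is the group of maps $a:\{0,1\}^*\to\Gamma$ (pointwise product) with $a(u)=\omega(a(u0),a(u1))$ for all $u$; $V$ acts on it by $\pi(v)(a)(s_{\sigma(i)}u)=a(t_iu)$ for all $i$, $u$ (determining $\pi(v)(a)\in K(\omega)$ uniquely); $G(\omega):=K(\omega)\rtimes V$ with $vav^{-1}=\pi(v)(a)$. *)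

From Stdlib Require Import List Arith ClassicalEpsilon.
Import ListNotations.

Record group := Group {
  gcar :> Type;
  gmul : gcar -> gcar -> gcar;
  gone : gcar;
  ginv : gcar -> gcar;
  gmulA : forall x y z, gmul x (gmul y z) = gmul (gmul x y) z;
  gmul1l : forall x, gmul gone x = x;
  gmul1r : forall x, gmul x gone = x;
  gmulVl : forall x, gmul (ginv x) x = gone;
  gmulVr : forall x, gmul x (ginv x) = gone
}.

Definition is_morph2 (G : group) (om : G -> G -> G) : Prop :=
  forall g g' h h', om (gmul G g g') (gmul G h h') = gmul G (om g h) (om g' h').

(* finite words over {0,1} (false = 0, true = 1) and the Cantor space *)
Definition word := list bool.
Definition cantor := nat -> bool.

Definition catw (t : word) (w : cantor) : cantor :=
  fun k => if k <? length t then nth k t false else w (k - length t).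

Definition is_prefix (t : word) (x : cantor) : Prop :=
  forall k, k < length t -> x k = nth k t false.

Definition complete_prefix_code (ts : list word) : Prop :=
  forall x : cantor, exists! i, i < length ts /\ is_prefix (nth i ts []) x.

(* continuity for the product topology on {0,1}^N *)
Definition cont (f : cantor -> cantor) : Prop :=
  forall x n, exists m, forall y, (forall k, k < m -> y k = x k) ->
    forall k, k < n -> f y k = f x k.

Definition homeo (f : cantor -> cantor) : Prop :=
  cont f /\ exists g, cont g /\ (forall x, g (f x) = x) /\ (forall x, f (g x) = x).

Definition is_perm (n : nat) (s : nat -> nat) : Prop :=
  (forall i, i < n -> s i < n) /\
  (forall i j, i < n -> j < n -> s i = s j -> i = j).

Definition V_witness (v : cantor -> cantor) (ts ss : list word) (s : nat -> nat) : Prop :=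
  complete_prefix_code ts /\ complete_prefix_code ss /\
  length ts = length ss /\ is_perm (length ts) s /\
  forall i w, i < length ts -> v (catw (nth i ts []) w) = catw (nth (s i) ss []) w.

Definition inV (v : cantor -> cantor) : Prop :=
  homeo v /\ exists ts ss s, V_witness v ts ss s.

Definition inK (G : group) (om : G -> G -> G) (a : word -> G) : Prop :=
  forall u, a u = om (a (u ++ [false])) (a (u ++ [true])).

Definition pi_rel (G : group) (om : G -> G -> G) (v : cantor -> cantor)
    (a b : word -> G) : Prop :=
  @inK G om b /\ exists ts ss s, V_witness v ts ss s /\
    forall i u, i < length ts -> b (nth (s i) ss [] ++ u) = a (nth i ts [] ++ u).

Definition pi (G : group) (om : G -> G -> G) (v : cantor -> cantor) (a : word -> G)
  : word -> G :=
  epsilon (inhabits (fun _ => gone G)) (fun b => @pi_rel G om v a b).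

(* G(omega) = K(omega) x| V *)
Definition elG (G : group) := ((word -> G) * (cantor -> cantor))%type.

Definition inG (G : group) (om : G -> G -> G) (p : elG G) : Prop :=
  @inK G om (fst p) /\ inV (snd p).

(* (a,v)(b,w) = (a * v b v^-1, v w) = (a * pi(v)(b), v o w) *)
Definition mulG (G : group) (om : G -> G -> G) (p q : elG G) : elG G :=
  (fun u => gmul G (fst p u) (@pi G om (snd p) (fst q) u),
   fun x => snd p (snd q x)).

Definition G_isomorphic (G : group) (om1 om2 : G -> G -> G) : Prop :=
  exists phi : elG G -> elG G,
    (forall p, @inG G om1 p -> @inG G om2 (phi p)) /\
    (forall p q, @inG G om1 p -> @inG G om1 q -> phi p = phi q -> p = q) /\
    (forall r, @inG G om2 r -> exists p, @inG G om1 p /\ phi p = r) /\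
    (forall p q, @inG G om1 p -> @inG G om1 q -> phi (@mulG G om1 p q) = @mulG G om2 (phi p) (phi q)).

(* Reversing every bit is an automorphism of the binary tree that exchanges
   the two children of each vertex.  Transporting a labelling [a] of the tree
   along it turns the relation [a u = ω~(a (u0), a (u1))] into
   [a u = ω(a (u0), a (u1))], and conjugating an element of V by it gives
   again an element of V (flip both prefix codes).  Since [π(v)(a)] is
   characterised by a uniqueness property, the bit flip commutes with [π],
   so it induces an isomorphism G(ω~) ≅ G(ω). *)

From Stdlib Require Import List Arith Lia FunctionalExtensionality ClassicalEpsilon FinFun Bool.
Import ListNotations.

Lemma catw_app (p q : word) (x : cantor) : catw (p ++ q) x = catw p (catw q x).
Proof.
  apply functional_extensionality; intro k; unfold catw; rewrite length_app.
  destruct (Nat.ltb_spec k (length p)).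
  - destruct (Nat.ltb_spec k (length p + length q)); [apply app_nth1; auto | lia].
  - destruct (Nat.ltb_spec (k - length p) (length q)),
             (Nat.ltb_spec k (length p + length q)); try lia.
    + apply app_nth2; auto.
    + f_equal; lia.
Qed.

Lemma catw_nth (p : word) (x : cantor) k : k < length p -> catw p x k = nth k p false.
Proof. intro Hk; unfold catw; destruct (Nat.ltb_spec k (length p)); [auto | lia]. Qed.

Lemma catw_length (p : word) (x : cantor) : catw p x (length p) = x 0.
Proof. unfold catw; destruct (Nat.ltb_spec (length p) (length p)); [lia | f_equal; lia]. Qed.

(* Test the tails at position [length p] with the complement of [q]'s bit there. *)
Lemma catw_ext_length_le (p q : word) :
  (forall x, catw p x = catw q x) -> length q <= length p.
Proof.
  intro H; apply Nat.nlt_ge; intro Hlt.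
  pose proof (f_equal (fun y => y (length p))
                (H (fun _ => negb (nth (length p) q false)))) as E; simpl in E.
  rewrite catw_length, catw_nth in E by auto.
  destruct (nth (length p) q false); discriminate.
Qed.

Lemma catw_inj (p q : word) : (forall x, catw p x = catw q x) -> p = q.
Proof.
  intro H.
  assert (Hl : length p = length q).
  { apply Nat.le_antisymm; apply catw_ext_length_le; intro x; auto. }
  apply nth_ext with false false; auto.
  intros n Hn; pose proof (f_equal (fun y => y n) (H (fun _ => false))) as E.
  simpl in E; rewrite !catw_nth in E by lia; exact E.
Qed.

Lemma is_prefix_catw_app (t u : word) (z : cantor) :
  is_prefix t (catw u z) -> length t <= length u -> u = t ++ skipn (length t) u.
Proof.
  intros H Hl; apply nth_ext with false false.
  - rewrite length_app, length_skipn; lia.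
  - intros n Hn; destruct (Nat.lt_ge_cases n (length t)).
    + rewrite app_nth1, <- H, catw_nth by lia; auto.
    + rewrite app_nth2, nth_skipn by auto; f_equal; lia.
Qed.

Definition maxlen (ss : list word) : nat := fold_right (fun w m => max (length w) m) 0 ss.

Lemma maxlen_ge (ss : list word) i : i < length ss -> length (nth i ss []) <= maxlen ss.
Proof.
  revert i; induction ss as [|w ss IH]; intros [|i] Hi; simpl in *; try lia.
  specialize (IH i ltac:(lia)); lia.
Qed.

Lemma complete_prefix_code_long (ss : list word) (u : word) :
  complete_prefix_code ss -> maxlen ss <= length u ->
  exists j w, j < length ss /\ u = nth j ss [] ++ w.
Proof.
  intros H Hu; destruct (H (catw u (fun _ => false))) as [j [[Hj Hp] _]].
  exists j, (skipn (length (nth j ss [])) u); split; auto.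
  apply is_prefix_catw_app with (fun _ => false); auto.
  pose proof (maxlen_ge ss j Hj); lia.
Qed.

Lemma is_perm_surj n s : is_perm n s -> forall j, j < n -> exists i, i < n /\ s i = j.
Proof. intros [Hs Hinj]; exact (proj1 (bInjective_bSurjective Hs) Hinj). Qed.

Lemma V_witness_long v ts ss s (u : word) :
  V_witness v ts ss s -> maxlen ss <= length u ->
  exists i w, i < length ts /\ u = nth (s i) ss [] ++ w.
Proof.
  intros (_ & Hss & Hlen & Hs & _) Hu.
  destruct (complete_prefix_code_long ss u Hss Hu) as (j & w & Hj & ->).
  destruct (is_perm_surj _ _ Hs j ltac:(lia)) as (i & Hi & <-); eauto.
Qed.

Lemma inV_inj v : inV v -> Injective v.
Proof. intros [[_ (g & _ & Hg & _)] _] x y E; rewrite <- (Hg x), <- (Hg y), E; auto. Qed.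

Lemma inK_eq_long (G : group) (O : G -> G -> G) (c1 c2 : word -> G) N :
  inK G O c1 -> inK G O c2 -> (forall u, N <= length u -> c1 u = c2 u) -> c1 = c2.
Proof.
  intros H1 H2 H; apply functional_extensionality; intro u.
  enough (Hk : forall k u, N <= length u + k -> c1 u = c2 u) by (apply (Hk N); lia).
  induction k as [|k IH]; intros u' Hu'; [apply H; lia|].
  rewrite (H1 u'), (H2 u'); f_equal; apply IH; rewrite length_app; simpl; lia.
Qed.

Section Pi.

Variables (G : group) (O : G -> G -> G) (v : cantor -> cantor) (b : word -> G).

(* [g] is the value at [u] that the witness [(ts, ss, σ)] prescribes for [π(v)(b)]. *)
Definition relabel (ts ss : list word) (s : nat -> nat) (u : word) (g : G) : Prop :=
  exists i w, i < length ts /\ u = nth (s i) ss [] ++ w /\ g = b (nth i ts [] ++ w).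

Hypothesis v_inj : Injective v.

Lemma relabel_eq ts ss s ts' ss' s' u g g' :
  V_witness v ts ss s -> V_witness v ts' ss' s' ->
  relabel ts ss s u g -> relabel ts' ss' s' u g' -> g = g'.
Proof.
  intros (_ & _ & _ & _ & Hv) (_ & _ & _ & _ & Hv')
    (i & w & Hi & Hu & ->) (i' & w' & Hi' & Hu' & ->).
  f_equal; apply catw_inj; intro x; apply v_inj.
  rewrite !catw_app, Hv, Hv' by auto.
  rewrite <- !catw_app, <- Hu, <- Hu'; reflexivity.
Qed.

Lemma pi_rel_relabel c ts ss s u :
  V_witness v ts ss s ->
  (forall i w, i < length ts -> c (nth (s i) ss [] ++ w) = b (nth i ts [] ++ w)) ->
  maxlen ss <= length u -> relabel ts ss s u (c u).
Proof.
  intros W Hc Hu; destruct (V_witness_long v ts ss s u W Hu) as (i & w & Hi & ->).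
  exists i, w; auto.
Qed.

Lemma pi_rel_unique c1 c2 : pi_rel G O v b c1 -> pi_rel G O v b c2 -> c1 = c2.
Proof.
  intros [K1 (ts & ss & s & W & Hc)] [K2 (ts' & ss' & s' & W' & Hc')].
  apply (inK_eq_long G O c1 c2 (maxlen ss + maxlen ss')); auto.
  intros u Hu; apply (relabel_eq ts ss s ts' ss' s' u); auto;
    apply pi_rel_relabel; auto; lia.
Qed.

Hypothesis b_inK : inK G O b.

Section Existence.

Variables (ts ss : list word) (s : nat -> nat).
Hypothesis W : V_witness v ts ss s.

Lemma relabel_split u g : relabel ts ss s u g ->
  exists g0 g1, relabel ts ss s (u ++ [false]) g0 /\
                relabel ts ss s (u ++ [true]) g1 /\ g = O g0 g1.
Proof.
  intros (i & w & Hi & -> & ->).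
  exists (b (nth i ts [] ++ w ++ [false])), (b (nth i ts [] ++ w ++ [true])).
  rewrite (b_inK (nth i ts [] ++ w)), <- !app_assoc.
  split; [|split]; [exists i, (w ++ [false]) | exists i, (w ++ [true]) | ]; auto.
Qed.

Definition pi_long (u : word) : G := epsilon (inhabits (gone G)) (relabel ts ss s u).

Lemma pi_long_eq u g : relabel ts ss s u g -> pi_long u = g.
Proof.
  intro H; apply (relabel_eq ts ss s ts ss s u); auto.
  unfold pi_long; apply epsilon_spec; eauto.
Qed.

(* Below the prefix code, [π(v)(b)] is forced by the recursion defining K(ω). *)
Fixpoint pi_fill (n : nat) (u : word) : G :=
  match n with
  | 0 => pi_long u
  | S n => O (pi_fill n (u ++ [false])) (pi_fill n (u ++ [true]))
  end.

Lemma pi_fill_relabel n u g : relabel ts ss s u g -> pi_fill n u = g.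
Proof.
  revert u g; induction n as [|n IH]; intros u g H; [apply pi_long_eq; auto|].
  destruct (relabel_split u g H) as (g0 & g1 & H0 & H1 & ->); simpl.
  rewrite (IH _ _ H0), (IH _ _ H1); reflexivity.
Qed.

Definition pi_build (u : word) : G := pi_fill (maxlen ss - length u) u.

Lemma pi_build_inK : inK G O pi_build.
Proof.
  intro u; unfold pi_build; rewrite !length_app; simpl.
  destruct (Nat.lt_ge_cases (length u) (maxlen ss)) as [Hlt | Hge].
  - replace (maxlen ss - length u) with (S (maxlen ss - (length u + 1))) by lia.
    reflexivity.
  - destruct (V_witness_long v ts ss s u W Hge) as (i & w & Hi & Hu).
    assert (Hr : relabel ts ss s u (b (nth i ts [] ++ w))) by (exists i, w; auto).
    destruct (relabel_split _ _ Hr) as (g0 & g1 & H0 & H1 & E).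
    rewrite !(pi_fill_relabel _ _ _ H0), (pi_fill_relabel _ _ _ H1),
      (pi_fill_relabel _ _ _ Hr); exact E.
Qed.

Lemma pi_build_rel : pi_rel G O v b pi_build.
Proof.
  split; [apply pi_build_inK | exists ts, ss, s; split; auto].
  intros i u Hi; apply pi_fill_relabel; exists i, u; auto.
Qed.

End Existence.

End Pi.

Lemma pi_spec (G : group) (O : G -> G -> G) v (b : word -> G) :
  inK G O b -> inV v -> pi_rel G O v b (pi G O v b).
Proof.
  intros Hb Hv; pose proof (inV_inj v Hv) as Hinj; destruct Hv as [_ (ts & ss & s & W)].
  unfold pi; apply epsilon_spec.
  eexists; eapply pi_build_rel; eauto.
Qed.

Definition flip_word (u : word) : word := map negb u.
Definition flip_cantor (x : cantor) : cantor := fun k => negb (x k).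
Definition conj_flip (v : cantor -> cantor) : cantor -> cantor :=
  fun x => flip_cantor (v (flip_cantor x)).

Lemma flip_word_involutive u : flip_word (flip_word u) = u.
Proof.
  unfold flip_word; rewrite map_map; erewrite map_ext; [apply map_id | apply negb_involutive].
Qed.

Lemma flip_cantor_involutive x : flip_cantor (flip_cantor x) = x.
Proof. apply functional_extensionality; intro k; apply negb_involutive. Qed.

Lemma conj_flip_involutive v : conj_flip (conj_flip v) = v.
Proof.
  apply functional_extensionality; intro x; unfold conj_flip.
  rewrite !flip_cantor_involutive; auto.
Qed.

Lemma length_flip_word u : length (flip_word u) = length u.
Proof. apply length_map. Qed.

Lemma flip_word_app u w : flip_word (u ++ w) = flip_word u ++ flip_word w.
Proof. apply map_app. Qed.

Lemma nth_flip_word k t : k < length t -> nth k (flip_word t) false = negb (nth k t false).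
Proof.
  intro Hk; unfold flip_word.
  rewrite nth_indep with (d' := negb false) by (rewrite length_map; auto).
  apply map_nth.
Qed.

Lemma nth_map_flip_word i (ts : list word) :
  nth i (map flip_word ts) [] = flip_word (nth i ts []).
Proof. exact (map_nth flip_word ts [] i). Qed.

Lemma flip_cantor_catw t w : flip_cantor (catw t w) = catw (flip_word t) (flip_cantor w).
Proof.
  apply functional_extensionality; intro k; unfold flip_cantor, catw.
  rewrite length_flip_word.
  destruct (Nat.ltb_spec k (length t)); [rewrite nth_flip_word|]; auto.
Qed.

Lemma is_prefix_flip t x : is_prefix (flip_word t) x <-> is_prefix t (flip_cantor x).
Proof.
  unfold is_prefix; rewrite length_flip_word.
  split; intros H k Hk; specialize (H k Hk); rewrite nth_flip_word in * by auto;
    unfold flip_cantor in *; [rewrite H | rewrite <- H]; rewrite negb_involutive; reflexivity.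
Qed.

Lemma complete_prefix_code_flip ts :
  complete_prefix_code ts -> complete_prefix_code (map flip_word ts).
Proof.
  intros H x; destruct (H (flip_cantor x)) as (i & [Hi Hp] & Hu).
  exists i; rewrite length_map; split.
  - rewrite nth_map_flip_word, is_prefix_flip; auto.
  - intros j [Hj Hpj]; rewrite nth_map_flip_word, is_prefix_flip in Hpj; auto.
Qed.

Lemma V_witness_conj_flip v ts ss s :
  V_witness v ts ss s -> V_witness (conj_flip v) (map flip_word ts) (map flip_word ss) s.
Proof.
  intros (Hts & Hss & Hlen & Hs & Hv); unfold V_witness; rewrite !length_map.
  split; [apply complete_prefix_code_flip; exact Hts|].
  split; [apply complete_prefix_code_flip; exact Hss|].
  split; [exact Hlen|]; split; [exact Hs|].
  intros i w Hi; unfold conj_flip; rewrite !nth_map_flip_word.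
  rewrite flip_cantor_catw, flip_word_involutive, Hv by auto.
  rewrite flip_cantor_catw, flip_cantor_involutive.
  reflexivity.
Qed.

Lemma cont_comp f g : cont f -> cont g -> cont (fun x => f (g x)).
Proof.
  intros Hf Hg x n; destruct (Hf (g x) n) as [m Hm]; destruct (Hg x m) as [l Hl].
  exists l; intros y Hy; apply Hm, Hl, Hy.
Qed.

Lemma cont_flip_cantor : cont flip_cantor.
Proof. intros x n; exists n; intros y Hy k Hk; unfold flip_cantor; rewrite Hy; auto. Qed.

Lemma cont_conj_flip v : cont v -> cont (conj_flip v).
Proof.
  intro Hv; apply (cont_comp flip_cantor (fun x => v (flip_cantor x)) cont_flip_cantor).
  exact (cont_comp v flip_cantor Hv cont_flip_cantor).
Qed.

Lemma inV_conj_flip v : inV v -> inV (conj_flip v).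
Proof.
  intros [[Hc (g & Hg & Hgv & Hvg)] (ts & ss & s & W)]; split.
  - split; [apply cont_conj_flip; auto|].
    exists (conj_flip g); split; [apply cont_conj_flip; auto|].
    split; intro x; unfold conj_flip;
      rewrite flip_cantor_involutive, ?Hgv, ?Hvg; apply flip_cantor_involutive.
  - exists (map flip_word ts), (map flip_word ss), s; apply V_witness_conj_flip; auto.
Qed.

Section Flip.

Variables (G : group) (O : G -> G -> G).

Lemma inK_flip a : inK G O a -> inK G (fun g h => O h g) (fun u => a (flip_word u)).
Proof. intros H u; rewrite (H (flip_word u)), !flip_word_app; reflexivity. Qed.

Lemma pi_rel_flip v b c :
  pi_rel G O v b c ->
  pi_rel G (fun g h => O h g) (conj_flip v)
    (fun u => b (flip_word u)) (fun u => c (flip_word u)).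
Proof.
  intros [Hc (ts & ss & s & W & Hcb)]; split; [apply inK_flip; auto|].
  exists (map flip_word ts), (map flip_word ss), s; split; [apply V_witness_conj_flip; auto|].
  intros i u Hi; rewrite length_map in Hi.
  rewrite !nth_map_flip_word, !flip_word_app, !flip_word_involutive; auto.
Qed.

Lemma pi_flip v b : inK G O b -> inV v ->
  pi G (fun g h => O h g) (conj_flip v) (fun u => b (flip_word u)) =
  (fun u => pi G O v b (flip_word u)).
Proof.
  intros Hb Hv; apply (pi_rel_unique G (fun g h => O h g) (conj_flip v)
                         (fun u => b (flip_word u)) (inV_inj _ (inV_conj_flip v Hv))).
  - apply pi_spec; [apply inK_flip | apply inV_conj_flip]; auto.
  - apply pi_rel_flip, pi_spec; auto.
Qed.

Definition flip_elG (p : elG G) : elG G := (fun u => fst p (flip_word u), conj_flip (snd p)).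

Lemma flip_elG_involutive p : flip_elG (flip_elG p) = p.
Proof.
  destruct p as [a v]; unfold flip_elG; simpl; rewrite conj_flip_involutive; f_equal.
  apply functional_extensionality; intro u; rewrite flip_word_involutive; auto.
Qed.

Lemma inG_flip p : inG G O p -> inG G (fun g h => O h g) (flip_elG p).
Proof. intros [Ha Hv]; split; [apply inK_flip | apply inV_conj_flip]; auto. Qed.

Lemma mulG_flip p q : inG G O p -> inG G O q ->
  flip_elG (mulG G O p q) = mulG G (fun g h => O h g) (flip_elG p) (flip_elG q).
Proof.
  intros [_ Hv] [Hb _]; unfold mulG, flip_elG; simpl.
  rewrite (pi_flip _ _ Hb Hv); f_equal.
  apply functional_extensionality; intro x; unfold conj_flip.
  rewrite flip_cantor_involutive; auto.
Qed.

End Flip.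

Theorem mainTheorem17 (G : group) (om : G -> G -> G) (hom : is_morph2 G om) :
  G_isomorphic G (fun g h => om h g) om.
Proof.
  set (om' := fun g h => om h g).
  exists (flip_elG G); split; [|split; [|split]].
  - exact (inG_flip G om').
  - intros p q _ _ E.
    rewrite <- (flip_elG_involutive G p), <- (flip_elG_involutive G q), E; auto.
  - intros r Hr; exists (flip_elG G r).
    split; [exact (inG_flip G om r Hr) | apply flip_elG_involutive].
  - exact (mulG_flip G om').
Qed.
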